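(* Let $\xi<-6$. There exists $\phi_0\in(0,\pi/4]$ such that for every $\phi\in(0,\phi_0]$ there is a constant $c=c(\xi,\phi)>0$ with the following property: for $z=|z|e^{\mathrm{i}w}$, $$\operatorname{Re}[2\mathrm{i}\theta(z)]\ge c|\sin w|(|z|^{-1}-|z|)\quad\text{for } z\in\Omega_{01}\cup\Omega_{02},$$ $$\operatorname{Re}[2\mathrm{i}\theta(z)]\le -c|\sin w|(|z|^{-1}-|z|)\quad\text{for } z\in\Omega_{03}\cup\Omega_{04}.$$
   Context: $\theta(z)=\frac12(z+z^{-1})\big[\xi-2+(z-z^{-1})^2\big]$. For $\xi<-6$ let $\zeta_1=\sqrt{(-\xi-\sqrt{\xi^2-36})/6}\in(0,1)$ (the smallest positive stationary point of $\theta$). Writing $z=u+\mathrm{i}v$, the regions are $\Omega_{01}=\{0<u<\zeta_1/2,\ 0<v<u\tan\phi\}$, $\Omega_{02}=\{-\zeta_1/2<u<0,\ 0<v<|u|\tan\phi\}$, $\Omega_{03}=\{-\zeta_1/2<u<0,\ -|u|\tan\phi<v<0\}$, $\Omega_{04}=\{0<u<\zeta_1/2,\ -u\tan\phi<v<0\}$. *)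

From Stdlib Require Import Reals.
From Coquelicot Require Import Coquelicot.
Open Scope R_scope.

Definition theta (xi : R) (z : C) : C :=
  ((/ 2 : C) * (z + / z) * ((xi - 2 : R) + (z - / z) * (z - / z)))%C.

Definition zeta1 (xi : R) : R := sqrt ((- xi - sqrt (xi ^ 2 - 36)) / 6).

Definition Omega01 (xi phi : R) (z : C) : Prop :=
  0 < Re z < zeta1 xi / 2 /\ 0 < Im z < Re z * tan phi.
Definition Omega02 (xi phi : R) (z : C) : Prop :=
  - (zeta1 xi / 2) < Re z < 0 /\ 0 < Im z < Rabs (Re z) * tan phi.
Definition Omega03 (xi phi : R) (z : C) : Prop :=
  - (zeta1 xi / 2) < Re z < 0 /\ - (Rabs (Re z) * tan phi) < Im z < 0.
Definition Omega04 (xi phi : R) (z : C) : Prop :=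
  0 < Re z < zeta1 xi / 2 /\ - (Re z * tan phi) < Im z < 0.

(** In polar coordinates [z = r e^{iw}] one has
    [Re(2iθ(z)) = sin w (1/r - r) G(r, sin w)] with
    [G = ξ + 6 - 12 sin²w + (3 - 4 sin²w)(1/r - r)²].
    In the four sectors [|Im z| < |Re z| tan φ <= |Re z|/2] near the origin we have
    [sin²w <= 1/5] and [r² < 5 ζ₁²/16], and since [ζ₁²] is a root of
    [3t² + ξt + 3 = 0] in [(0,1)], the term [(1/r - r)²] dominates and [G >= 1/5].
    The sign of [Re(2iθ(z))] is then the sign of [sin w], which gives both
    inequalities with [φ₀ = atan(1/2)] and [c = 1/5]. *)

From Stdlib Require Import Reals Lra Psatz.
From Coquelicot Require Import Coquelicot.
Open Scope R_scope.

Definition theta_factor (xi r s : R) : R :=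
  xi + 6 - 12 * s ^ 2 + (3 - 4 * s ^ 2) * (/ r - r) ^ 2.

Lemma Re_2i_theta_cartesian xi x y q :
  q = x * x + y * y -> q <> 0 ->
  Re (2 * Ci * theta xi (x, y))%C =
  y * (1 - q) / q *
  (xi + 6 - 12 * (y * y / q) + (3 - 4 * (y * y / q)) * ((1 - q) ^ 2 / q)).
Proof.
  intros -> Hq.
  unfold theta, Cmult, Cplus, Cminus, Copp, Cinv, Ci, RtoC, Re; simpl.
  field; auto.
Qed.

Lemma Re_2i_theta_polar xi r w : 0 < r ->
  Re (2 * Ci * theta xi ((r * cos w)%R, (r * sin w)%R))%C =
  sin w * (/ r - r) * theta_factor xi r (sin w).
Proof.
  intros Hr.
  assert (Hq : r * cos w * (r * cos w) + r * sin w * (r * sin w) = r ^ 2).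
  { pose proof (sin2_cos2 w) as Hsc; unfold Rsqr in Hsc; nra. }
  rewrite (Re_2i_theta_cartesian _ _ _ _ (eq_sym Hq)) by (apply pow_nonzero; lra).
  unfold theta_factor; field; lra.
Qed.

Lemma zeta1_sq_root xi : xi < -6 ->
  0 < zeta1 xi ^ 2 < 1 /\ 3 * (zeta1 xi ^ 2) ^ 2 + xi * zeta1 xi ^ 2 + 3 = 0.
Proof.
  intros Hxi.
  set (S := sqrt (xi ^ 2 - 36)).
  assert (HS0 : 0 <= S) by apply sqrt_pos.
  assert (HS2 : S * S = xi ^ 2 - 36) by (apply sqrt_sqrt; nra).
  assert (HSlt : S < - xi) by nra.
  assert (HSgt : - xi - 6 < S) by nra.
  assert (Hz : zeta1 xi ^ 2 = (- xi - S) / 6).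
  { unfold zeta1; fold S; rewrite <- Rsqr_pow2; apply Rsqr_sqrt; lra. }
  rewrite Hz; split; [lra | nra].
Qed.

Lemma theta_factor_ge xi r s : xi < -6 -> 0 < r ->
  16 * r ^ 2 < 5 * zeta1 xi ^ 2 -> 5 * s ^ 2 <= 1 ->
  1 / 5 <= theta_factor xi r s.
Proof.
  intros Hxi Hr Hrz Hs.
  destruct (zeta1_sq_root xi Hxi) as [[Ht0 Ht1] Hroot].
  set (t := zeta1 xi ^ 2) in *.
  set (u := (/ r - r) ^ 2).
  assert (Hu0 : 0 <= u) by (apply pow2_ge_0).
  assert (Hu : u = / r ^ 2 - 2 + r ^ 2) by (unfold u; field; lra).
  assert (Hinv_r : 16 / (5 * t) < / r ^ 2).
  { apply (Rmult_lt_reg_r (5 * t * r ^ 2)); [nra |].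
    field_simplify; lra. }
  assert (Hxi_t : xi = - 3 * t - 3 * / t).
  { apply (Rmult_eq_reg_r t); [| lra].
    replace ((- 3 * t - 3 * / t) * t) with (- 3 * t ^ 2 - 3) by (field; lra).
    nra. }
  assert (Hinv_t : 1 < / t) by (rewrite <- Rinv_1; apply Rinv_lt_contravar; lra).
  assert (Hdiv : 16 / (5 * t) = 16 / 5 * / t) by (field; lra).
  assert (Hdom : 11 / 5 * u <= (3 - 4 * s ^ 2) * u) by nra.
  pose proof (pow2_ge_0 r).
  (* With [v = 1/t > 1 > t]: [G > -3t + (101/25) v - 4/5 > 6/25]. *)
  unfold theta_factor; fold u; lra.
Qed.

Definition small_sector (xi : R) (z : C) : Prop :=
  Rabs (Re z) < zeta1 xi / 2 /\ 0 < Rabs (Im z) <= Rabs (Re z) / 2.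

Lemma small_sector_polar xi z w : small_sector xi z ->
  z = (Cmod z * cos w, Cmod z * sin w) ->
  0 < Cmod z /\ 16 * Cmod z ^ 2 < 5 * zeta1 xi ^ 2 /\ 5 * sin w ^ 2 <= 1.
Proof.
  intros [Hx [Hy0 Hy]] Hz.
  destruct z as [x y]; unfold Re, Im in *; simpl fst in *; simpl snd in *.
  injection Hz as _ Hyw.
  assert (Hr2 : Cmod (x, y) ^ 2 = x ^ 2 + y ^ 2).
  { unfold Cmod; simpl fst; simpl snd; rewrite <- Rsqr_pow2, Rsqr_sqrt; nra. }
  assert (Hxy : 4 * y ^ 2 <= x ^ 2).
  { rewrite <- (pow2_abs x), <- (pow2_abs y); nra. }
  assert (Hx2 : 4 * x ^ 2 < zeta1 xi ^ 2).
  { rewrite <- (pow2_abs x); pose proof (Rabs_pos x); nra. }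
  assert (Hy2 : 0 < y ^ 2) by (rewrite <- (pow2_abs y); nra).
  assert (Hr : 0 < Cmod (x, y)) by (apply Cmod_gt_0; intros [= _ ->]; simpl in Hy2; lra).
  repeat split; [lra | lra |].
  set (r := Cmod (x, y)) in *.
  apply (Rmult_le_reg_l (r ^ 2)); [nra |].
  replace (r ^ 2 * (5 * sin w ^ 2)) with (5 * y ^ 2) by (rewrite Hyw; ring).
  lra.
Qed.

Lemma Re_2i_theta_small_sector xi z w : xi < -6 -> small_sector xi z ->
  z = (Cmod z * cos w, Cmod z * sin w) ->
  Re (2 * Ci * theta xi z)%C = sin w * (/ Cmod z - Cmod z) * theta_factor xi (Cmod z) (sin w) /\
  0 < / Cmod z - Cmod z /\ 1 / 5 <= theta_factor xi (Cmod z) (sin w).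
Proof.
  intros Hxi Hsec Hz.
  destruct (small_sector_polar xi z w Hsec Hz) as [Hr [Hrz Hs]].
  split; [| split].
  - rewrite Hz at 1; apply Re_2i_theta_polar, Hr.
  - assert (Cmod z < 1) by (pose proof (zeta1_sq_root xi Hxi); nra).
    assert (1 < / Cmod z) by (rewrite <- Rinv_1; apply Rinv_lt_contravar; lra).
    lra.
  - apply theta_factor_ge; assumption.
Qed.

Lemma Re_2i_theta_small_sector_pos xi z w : xi < -6 -> small_sector xi z ->
  0 < Im z -> z = (Cmod z * cos w, Cmod z * sin w) ->
  Re (2 * Ci * theta xi z)%C >= 1 / 5 * Rabs (sin w) * (/ Cmod z - Cmod z).
Proof.
  intros Hxi Hsec Hy Hz.
  destruct (Re_2i_theta_small_sector xi z w Hxi Hsec Hz) as [-> [Hgap HG]].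
  assert (Him : Im z = Cmod z * sin w) by (rewrite Hz at 1; reflexivity).
  assert (Hsin : 0 < sin w) by (pose proof (Cmod_ge_0 z); nra).
  rewrite Rabs_right by lra.
  assert (0 < sin w * (/ Cmod z - Cmod z)) by nra.
  nra.
Qed.

Lemma Re_2i_theta_small_sector_neg xi z w : xi < -6 -> small_sector xi z ->
  Im z < 0 -> z = (Cmod z * cos w, Cmod z * sin w) ->
  Re (2 * Ci * theta xi z)%C <= - (1 / 5 * Rabs (sin w) * (/ Cmod z - Cmod z)).
Proof.
  intros Hxi Hsec Hy Hz.
  destruct (Re_2i_theta_small_sector xi z w Hxi Hsec Hz) as [-> [Hgap HG]].
  assert (Him : Im z = Cmod z * sin w) by (rewrite Hz at 1; reflexivity).
  assert (Hsin : sin w < 0) by (pose proof (Cmod_ge_0 z); nra).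
  rewrite Rabs_left by lra.
  assert (sin w * (/ Cmod z - Cmod z) < 0) by nra.
  nra.
Qed.

Lemma Omega_small_sector xi phi z : tan phi <= 1 / 2 ->
  Omega01 xi phi z \/ Omega02 xi phi z \/ Omega03 xi phi z \/ Omega04 xi phi z ->
  small_sector xi z.
Proof.
  intros Htan Hz; unfold small_sector.
  destruct Hz as [[Hx Hy] | [[Hx Hy] | [[Hx Hy] | [Hx Hy]]]];
    [ rewrite (Rabs_pos_eq (Re z)), (Rabs_pos_eq (Im z)) by lra
    | rewrite (Rabs_left (Re z)), (Rabs_pos_eq (Im z)) in * by lra
    | rewrite (Rabs_left (Re z)), (Rabs_left (Im z)) in * by lra
    | rewrite (Rabs_pos_eq (Re z)), (Rabs_left (Im z)) by lra ];
    split; try split; nra.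
Qed.

Lemma tan_le_half phi : 0 < phi <= atan (1 / 2) -> tan phi <= 1 / 2.
Proof.
  intros Hphi.
  assert (atan (1 / 2) < PI / 4) by (rewrite <- atan_1; apply atan_increasing; lra).
  rewrite <- (tan_atan (1 / 2)).
  apply tan_incr_1; lra.
Qed.

Theorem mainTheorem3 :
  forall xi : R, xi < -6 ->
  exists phi0 : R, 0 < phi0 <= PI / 4 /\
  forall phi : R, 0 < phi <= phi0 ->
  exists c : R, 0 < c /\
    (forall (z : C) (w : R),
       (Omega01 xi phi z \/ Omega02 xi phi z) ->
       z = ((Cmod z * cos w)%R, (Cmod z * sin w)%R) ->
       Re (2 * Ci * theta xi z)%C >= c * Rabs (sin w) * (/ Cmod z - Cmod z)) /\
    (forall (z : C) (w : R),
       (Omega03 xi phi z \/ Omega04 xi phi z) ->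
       z = ((Cmod z * cos w)%R, (Cmod z * sin w)%R) ->
       Re (2 * Ci * theta xi z)%C <= - (c * Rabs (sin w) * (/ Cmod z - Cmod z))).
Proof.
  intros xi Hxi.
  exists (atan (1 / 2)); split.
  - split.
    + rewrite <- atan_0; apply atan_increasing; lra.
    + left; rewrite <- atan_1; apply atan_increasing; lra.
  - intros phi Hphi.
    pose proof (tan_le_half phi Hphi) as Htan.
    exists (1 / 5); split; [lra | split]; intros z w Hz Hpolar.
    + apply Re_2i_theta_small_sector_pos; try assumption.
      * apply (Omega_small_sector xi phi); tauto.
      * destruct Hz as [[_ Hy] | [_ Hy]]; lra.
    + apply Re_2i_theta_small_sector_neg; try assumption.
      * apply (Omega_small_sector xi phi); tauto.
      * destruct Hz as [[_ Hy] | [_ Hy]]; lra.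
Qed.
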